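(* Let $c^1,\dots,c^n$ be a lattice basis of $\mathbb{Z}^n$, $K=\{x\in\mathbb{R}^n: c^ix\ge0,\ i=1,\dots,n\}$, and $\bar x\in K\cap\mathbb{Z}^n$. Then the recession cone of $Q(\bar x)$ is $K$, and $Q(\bar x)$ is a full-dimensional polyhedron. Moreover, if $\bar x\ne0$ and $\ell:=\ell(\bar x)$, the extreme points of $Q(\bar x)$ are precisely $v^1,\dots,v^\ell$, where $v^\ell=\bar x$ and, for $k=1,\dots,\ell-1$, $v^k$ is the unique point satisfying $c^iv^k=c^i\bar x$ for $i=1,\dots,k-1$, $c^kv^k=c^k\bar x+1$, and $c^iv^k=0$ for $i=k+1,\dots,n$.
   Context: A lattice basis of $\mathbb{Z}^n$ is a set of $n$ linearly independent vectors $c^1,\dots,c^n\in\mathbb{Z}^n$ such that every $v\in\mathbb{Z}^n$ equals $\sum_i\lambda_ic^i$ with all $\lambda_i\in\mathbb{Z}$. The associated lexicographic order: $x\prec y$ iff $x\ne y$ and $c^ix<c^iy$, where $i$ is the smallest index with $c^ix\ne c^iy$; $\preceq,\succeq$ as usual. $Q(\bar x):=\operatorname{conv}\{x\in K\cap\mathbb{Z}^n: x\succeq\bar x\}$. For $\bar x\in K\setminus\{0\}$, the leading index $\ell(\bar x)$ is the largest $i$ with $c^i\bar x>0$. *)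

From HB Require Import structures.
From mathcomp Require Import all_boot all_order all_algebra.
From mathcomp Require Import reals.
Set Implicit Arguments. Unset Strict Implicit. Unset Printing Implicit Defensive.
Import Order.TTheory GRing.Theory Num.Theory.
Local Open Scope ring_scope.

Section Defs.
Variables (R : realType) (n : nat).
Implicit Types (x y z d : 'cV[R]_n) (P : 'cV[R]_n -> Prop).

(* The basis vectors c^1..c^n are the rows of an integer matrix C
   (row i, 0-based, is c^{i+1}). *)
Definition realmx (C : 'M[int]_n) : 'M[R]_n := map_mx (fun z : int => z%:~R) C.

Definition cdot (C : 'M[int]_n) (i : 'I_n) x : R := (realmx C *m x) i 0.

Definition lattice_basis (C : 'M[int]_n) : Prop :=
  (forall lam : 'rV[R]_n, lam *m realmx C = 0 -> lam = 0) /\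
  (forall v : 'rV[int]_n, exists lam : 'rV[int]_n, v = lam *m C).

Definition is_int_vec x : Prop := forall i, x i 0 \is a Num.int.

Definition Kcone (C : 'M[int]_n) x : Prop := forall i, 0 <= cdot C i x.

Definition lex_lt (C : 'M[int]_n) x y : Prop :=
  x <> y /\ exists i : 'I_n,
    (forall j : 'I_n, (j < i)%N -> cdot C j x = cdot C j y) /\
    cdot C i x < cdot C i y.

Definition lex_ge (C : 'M[int]_n) x y : Prop := x = y \/ lex_lt C y x.

Definition conv P x : Prop :=
  exists (m : nat) (p : 'I_m -> 'cV[R]_n) (w : 'I_m -> R),
    (forall j, P (p j)) /\ (forall j, 0 <= w j) /\ \sum_j w j = 1 /\
    x = \sum_j w j *: p j.

Definition Qset (C : 'M[int]_n) xbar : 'cV[R]_n -> Prop :=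
  conv (fun x => Kcone C x /\ is_int_vec x /\ lex_ge C x xbar).

Definition rec_cone P d : Prop :=
  forall x, P x -> forall t : R, 0 <= t -> P (x + t *: d).

Definition polyhedron P : Prop :=
  exists (m : nat) (A : 'M[R]_(m, n)) (b : 'cV[R]_m),
    forall x, P x <-> (forall i, (A *m x) i 0 <= b i 0).

(* full-dimensional: contains n+1 affinely independent points
   x0, x0 + d_1, ..., x0 + d_n (d_j = columns of an invertible D) *)
Definition full_dim P : Prop :=
  exists x0 (D : 'M[R]_n),
    P x0 /\ D \in unitmx /\ (forall j : 'I_n, P (x0 + col j D)).

Definition extreme_point P x : Prop :=
  P x /\ forall y z (t : R), P y -> P z -> 0 < t < 1 ->
    x = t *: y + (1 - t) *: z -> y = x /\ z = x.

(* l (0-based) is the leading index of xbar: the largest i with c^i xbar > 0 *)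
Definition leading_index (C : 'M[int]_n) xbar (l : 'I_n) : Prop :=
  0 < cdot C l xbar /\ forall i : 'I_n, (l < i)%N -> ~ (0 < cdot C i xbar).

(* v is the point v^k (0-based k) for xbar *)
Definition vpoint (C : 'M[int]_n) xbar (k : 'I_n) v : Prop :=
  (forall i : 'I_n, (i < k)%N -> cdot C i v = cdot C i xbar) /\
  cdot C k v = cdot C k xbar + 1 /\
  (forall i : 'I_n, (k < i)%N -> cdot C i v = 0).

End Defs.

Arguments realmx {R n}.
Arguments cdot {R n}.
Arguments lattice_basis R {n}.
Arguments is_int_vec {R n}.
Arguments Kcone {R n}.
Arguments lex_lt {R n}.
Arguments lex_ge {R n}.
Arguments conv {R n}.
Arguments Qset {R n}.
Arguments rec_cone {R n}.
Arguments polyhedron {R n}.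
Arguments full_dim {R n}.
Arguments extreme_point {R n}.
Arguments leading_index {R n}.
Arguments vpoint {R n}.

(* Since C is unimodular (its inverse is an integer matrix), y = C x maps
   K ∩ Z^n onto the nonnegative integer orthant and the order ⪯ onto the
   ordinary lexicographic order.  With a = C xbar it therefore suffices to
   describe P = conv {y ∈ Z^n : y >= 0, y >=lex a}.  Put L_0(y) = 1 and
   L_(j+1)(y) = (a_j + 1) L_j(y) - y_j, an affine function of y.  Then
     P = {y >= 0 : a_j L_j(y) <= y_j for all j}.
   An integer y >=lex a has L_j(y) = 1 as long as y agrees with a and
   L_j(y) <= 0 after its first strict increase, so it satisfies these
   inequalities.  Conversely, for y in the right-hand side the weights
   max(0, L_j(y)) are nonincreasing; their differences write y as a convex
   combination of the points v^0, ..., v^n (v^n = a) plus a nonnegative vector,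
   and a nonnegative vector is a convex combination of nonnegative integer
   multiples of unit vectors.  The rest is read off this description, with
   indices from 0 and l the leading index of a: the recession cone is the
   orthant, only the v^k can be extreme, v^k is extreme for k < l and k = n
   because it is the only point of P making a suitable set of the inequalities
   tight, and for l <= k < n the point v^k = a + e_k is the midpoint of a and
   a + 2 e_k. *)

From Pilot Require Import Defs.
From mathcomp Require Import all_boot all_order all_algebra.
From mathcomp Require Import reals.
From mathcomp Require Import ring lra.
Import Order.TTheory GRing.Theory Num.Theory.
Local Open Scope ring_scope.
Set Implicit Arguments. Unset Strict Implicit. Unset Printing Implicit Defensive.

Lemma convex_comb_eq0l (R : realFieldType) (t u v : R) :
  0 < t < 1 -> 0 <= u -> 0 <= v -> t * u + (1 - t) * v = 0 -> u = 0.
Proof.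
move=> /andP[t_gt0 t_lt1] u_ge0 v_ge0 uv0.
have tv_ge0 : 0 <= (1 - t) * v by rewrite mulr_ge0 // subr_ge0 ltW.
have tu_ge0 : 0 <= t * u by rewrite mulr_ge0 // ltW.
have : t * u = 0 by lra.
by move/eqP; rewrite mulf_eq0 gt_eqF //= => /eqP.
Qed.

Lemma int_num_ltD1 (R : archiRealFieldType) (x y : R) :
  x \is a Num.int -> y \is a Num.int -> x < y -> x + 1 <= y.
Proof.
move=> xi yi lt_xy; have := norm_intr_ge1 (rpredB yi xi).
rewrite ger0_norm ?subr_ge0 ?(ltW lt_xy) // subr_eq0 gt_eqF // => /(_ isT); lra.
Qed.

Section ExtendedCoordinates.
Variables (R : numDomainType) (n : nat).
Implicit Types (y z : 'cV[R]_n).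

Lemma sum_ord_delta N (F : nat -> R) i : (i < N)%N ->
  \sum_(k < N) (i == k)%:R * F k = F i.
Proof.
move=> iN; rewrite (bigD1 (Ordinal iN)) //= eqxx mul1r big1 ?addr0 // => k ik.
by move/negbTE: ik; rewrite eq_sym -val_eqE /= => ->; rewrite mul0r.
Qed.

(* Coordinates indexed by nat, zero from n on, so that recursions along the
   coordinates need no bound checks. *)
Definition coord y (j : nat) : R := \sum_(i < n) (i == j :> nat)%:R * y i 0.

Lemma coord_ord y (j : 'I_n) : coord y j = y j 0.
Proof.
rewrite /coord (bigD1 j) //= eqxx mul1r big1 ?addr0 // => i ij.
by move/negbTE: ij; rewrite -val_eqE => ->; rewrite mul0r.
Qed.

Lemma coord_out y j : (n <= j)%N -> coord y j = 0.
Proof.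
move=> nj; rewrite /coord big1 // => i _.
by rewrite ltn_eqF ?mul0r // (leq_trans (ltn_ord i) nj).
Qed.

Lemma coordD y z j : coord (y + z) j = coord y j + coord z j.
Proof. by rewrite /coord -big_split; apply: eq_bigr => i _; rewrite mxE mulrDr. Qed.

Lemma coordZ t y j : coord (t *: y) j = t * coord y j.
Proof. by rewrite /coord mulr_sumr; apply: eq_bigr => i _; rewrite mxE mulrCA. Qed.

Lemma coord_inj y z : (forall j, coord y j = coord z j) -> y = z.
Proof. by move=> eq_yz; apply/matrixP => i k; rewrite ord1 -!coord_ord eq_yz. Qed.

Lemma coord_ge0 y : (forall i, 0 <= y i 0) -> forall j, 0 <= coord y j.
Proof.
move=> y_ge0 j; case: (ltnP j n) => [jn|/coord_out-> //].
by rewrite -[j]/(nat_of_ord (Ordinal jn)) coord_ord.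
Qed.

End ExtendedCoordinates.

Lemma sum_enum_val (V : nmodType) (I : finType) (F : I -> V) :
  \sum_(j < #|I|) F (enum_val j) = \sum_i F i.
Proof. by rewrite -big_enum_val; apply: eq_bigl. Qed.

Section ConvexHull.
Variables (R : realType) (n : nat).
Implicit Types (P : 'cV[R]_n -> Prop) (v x y z : 'cV[R]_n).

Definition convex P : Prop :=
  forall m (w : 'I_m -> R) (p : 'I_m -> 'cV[R]_n), (forall j, P (p j)) ->
  (forall j, 0 <= w j) -> \sum_j w j = 1 -> P (\sum_j w j *: p j).

Lemma conv_fin (I : finType) P (p : I -> 'cV[R]_n) (w : I -> R) :
  (forall i, P (p i)) -> (forall i, 0 <= w i) -> \sum_i w i = 1 ->
  conv P (\sum_i w i *: p i).
Proof.
move=> Pp w_ge0 w_sum1.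
exists #|I|, (fun j => p (enum_val j)), (fun j => w (enum_val j)).
by rewrite sum_enum_val (sum_enum_val (fun i => w i *: p i)).
Qed.

Lemma mem_conv P x : P x -> conv P x.
Proof.
move=> Px; exists 1%N, (fun _ => x), (fun _ => 1).
by rewrite !big_ord1 scale1r; split=> //; split=> // _; apply: ler01.
Qed.

Lemma conv_convex P : convex (conv P).
Proof.
move=> m w p conv_p w_ge0 w_sum1.
have [ms /fin_all_exists[q /fin_all_exists[u Hqu]]] := fin_all_exists conv_p.
have sumI (V : nmodType) (F : forall j, 'I_(ms j) -> V) :
    \sum_(s : {j : 'I_m & 'I_(ms j)}) F (tag s) (tagged s) = \sum_j \sum_i F j i.
  by rewrite (sig_big_dep xpredT (fun _ _ => true) F).
have -> : \sum_j w j *: p j = \sum_(s : {j : 'I_m & 'I_(ms j)})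
    (w (tag s) * u _ (tagged s)) *: q _ (tagged s).
  rewrite (sumI _ (fun j i => (w j * u j i) *: q j i)); apply: eq_bigr => j _.
  have [_ [_ [_ ->]]] := Hqu j; rewrite scaler_sumr.
  by apply: eq_bigr => i _; rewrite scalerA.
apply: conv_fin => [[j i]|[j i]|]; first by have [] := Hqu j.
  by have [_ [u_ge0 _]] := Hqu j; rewrite mulr_ge0.
rewrite (sumI _ (fun j i => w j * u j i)) -w_sum1; apply: eq_bigr => j _.
by have [_ [_ [u_sum1 _]]] := Hqu j; rewrite -mulr_sumr u_sum1 mulr1.
Qed.

Lemma extreme_point_midpoint P v y z : extreme_point P v -> P y -> P z ->
  v = 2^-1 *: y + (1 - 2^-1) *: z -> y = v.
Proof.
move=> [_ ext_v] Py Pz eq_v.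
have half01 : 0 < (2^-1 : R) < 1.
  by apply/andP; split; [rewrite invr_gt0 ltr0n | rewrite invf_lt1 ?ltr0n ?ltr1n].
by have [] := ext_v y z _ Py Pz half01 eq_v.
Qed.

Lemma extreme_point_comb P v m (lam : 'I_m -> R) (p : 'I_m -> 'cV[R]_n) :
  convex P -> extreme_point P v -> (forall k, P (p k)) ->
  (forall k, 0 <= lam k) -> \sum_k lam k = 1 -> v = \sum_k lam k *: p k ->
  exists k, v = p k.
Proof.
move=> cvxP [_ ext_v] Pp lam_ge0 lam_sum1 v_comb.
have [k lam_k_neq0] : exists k, lam k != 0.
  case: (pickP (fun k => lam k != 0)) => [k ?|lam0]; first by exists k.
  suff : \sum_k lam k = 0 by rewrite lam_sum1 => /eqP; rewrite oner_eq0.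
  by apply: big1 => k _; move: (lam0 k) => /negbFE/eqP.
exists k; have lam_k_gt0 : 0 < lam k by rewrite lt_def lam_k_neq0 lam_ge0.
have rest_ge0 : 0 <= \sum_(j | j != k) lam j by rewrite sumr_ge0.
rewrite (bigD1 k) //= in lam_sum1; rewrite (bigD1 k) //= in v_comb.
have [lam_k1 | lam_k_neq1] := eqVneq (lam k) 1.
  have rest_sum0 : \sum_(j | j != k) lam j = 0 by move: lam_sum1; lra.
  have rest0 := psumr_eq0P (fun j _ => lam_ge0 j) rest_sum0.
  by rewrite v_comb lam_k1 scale1r big1 ?addr0 // => j /rest0->; rewrite scale0r.
have lam_k_lt1 : lam k < 1 by rewrite lt_neqAle lam_k_neq1 /=; lra.
pose c := (1 - lam k)^-1.
have c_gt0 : 0 < c by rewrite invr_gt0 subr_gt0.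
pose w := \sum_j (if j != k then c * lam j else 0) *: p j.
have Pw : P w.
  apply: cvxP => // [j|]; first by case: ifP; rewrite ?mulr_ge0 ?(ltW c_gt0).
  rewrite -big_mkcond /= -mulr_sumr /c.
  have -> : \sum_(j | j != k) lam j = 1 - lam k by lra.
  by rewrite mulVf // subr_eq0 eq_sym.
have : v = lam k *: p k + (1 - lam k) *: w.
  rewrite v_comb /w scaler_sumr [in RHS](bigD1 k) //= eqxx scale0r scaler0 add0r.
  congr (_ + _); apply: eq_bigr => j ->; rewrite scalerA mulrA /c.
  by rewrite mulfV ?mul1r // subr_eq0 eq_sym.
by move/ext_v => /(_ (Pp k) Pw); rewrite lam_k_gt0 lam_k_lt1 => /(_ isT) [].
Qed.

End ConvexHull.

Lemma sum_pair_bool (V : nmodType) (I : finType) (F : I * bool -> V) :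
  \sum_p F p = \sum_i (F (i, true) + F (i, false)).
Proof.
transitivity (\sum_(p : I * bool) (fun i b => F (i, b)) p.1 p.2).
  by apply: eq_bigr => -[].
rewrite -(pair_bigA _ (fun i b => F (i, b))) /=.
by apply: eq_bigr => i _; rewrite big_bool.
Qed.

Section NonnegSplit.
Variables (R : archiRealFieldType) (n : nat).

Definition unitv k : 'cV[R]_n := \col_(i < n) (i == k :> nat)%:R.

Lemma sum_coord_unitv y : \sum_(i < n.+1) coord y i *: unitv i = y.
Proof.
apply/matrixP => j k; rewrite ord1 summxE.
under eq_bigr => i _ do rewrite !mxE mulrC.
by rewrite (@sum_ord_delta _ n.+1 (coord y)) ?coord_ord // ltnS ltnW.
Qed.

(* The index n, for which unitv n = 0, keeps the weight 1/(n+1) meaningful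
   when n = 0. *)
Lemma nonneg_split_unitv (r : 'cV[R]_n) : (forall i, 0 <= r i 0) ->
  exists (w m : 'I_n.+1 * bool -> R),
  [/\ forall p, 0 <= w p, \sum_p w p = 1, forall p, m p \is a Num.int /\ 0 <= m p
    & forall q, q + r = \sum_p w p *: (q + m p *: unitv p.1)].
Proof.
move=> r_ge0; pose c : R := n.+1%:R.
have c_gt0 : 0 < c by rewrite ltr0n.
pose s i := c * coord r i; pose f i := Num.floor (s i).
pose th i := s i - (f i)%:~R.
have th01 i : 0 <= th i < 1.
  have /andP[] := floor_itv (s i); rewrite intrD mulr1z /th -/(f i) => ? ?.
  by apply/andP; split; lra.
pose w (p : 'I_n.+1 * bool) := c^-1 * (if p.2 then th p.1 else 1 - th p.1).
pose m (p : 'I_n.+1 * bool) : R := (f p.1)%:~R + p.2%:R.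
have w_sum1 : \sum_p w p = 1.
  rewrite sum_pair_bool /w /=.
  under eq_bigr => i _ do rewrite -mulrDr addrC subrK mulr1.
  by rewrite sumr_const card_ord -mulr_natr mulVf // gt_eqF.
exists w, m; split => //.
- move=> [i b]; rewrite /w mulr_ge0 ?invr_ge0 ?(ltW c_gt0) //.
  by have := th01 i; case: b => /andP[] /=; lra.
- move=> [i b]; rewrite /m rpredD ?intr_int ?natr_int //.
  rewrite addr_ge0 // ler0z /f floor_ge0.
  by apply: mulr_ge0; [exact: ltW | exact: coord_ge0].
move=> q; rewrite (eq_bigr (fun p => w p *: q + (w p * m p) *: unitv p.1)); last first.
  by move=> p _; rewrite scalerDr scalerA.
rewrite big_split /= -scaler_suml w_sum1 scale1r sum_pair_bool /=.
congr (_ + _); rewrite -[LHS]sum_coord_unitv; apply: eq_bigr => i _.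
rewrite -scalerDl; congr (_ *: _).
by rewrite /w /m /th /s /=; field; rewrite nat1r pnatr_eq0.
Qed.

End NonnegSplit.

Arguments unitv {R n} k.

Section LexHull.
Variables (R : archiRealFieldType) (n : nat) (A : 'cV[R]_n).
Implicit Types (y z q : 'cV[R]_n).
Local Notation a := (coord A).

(* The affine functions L_j of the header, through their coefficients (the
   recursion is lformS), so that lexineq is visibly a polyhedron. *)
Fixpoint lform_cst (j : nat) : R :=
  if j is j'.+1 then (a j' + 1) * lform_cst j' else 1.

Fixpoint lform_coef (j i : nat) : R :=
  if j is j'.+1 then (a j' + 1) * lform_coef j' i - (i == j')%:R else 0.

Definition lform j y : R := lform_cst j + \sum_(i < n) lform_coef j i * y i 0.

Definition lexineq y : Prop :=
  forall j, 0 <= coord y j /\ a j * lform j y <= coord y j.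

Definition lexineq_mx : 'M[R]_(n + n, n) :=
  \matrix_(r, i) match split r with
                 | inl j => a j * lform_coef j i - (i == j :> nat)%:R
                 | inr j => - (i == j :> nat)%:R end.

Definition lexineq_rhs : 'cV[R]_(n + n) :=
  \col_r match split r with inl j => - (a j * lform_cst j) | inr j => 0 end.

Lemma lform0 y : lform 0 y = 1.
Proof. by rewrite /lform /= big1 ?addr0 // => i; rewrite mul0r. Qed.

Lemma lformS j y : lform j.+1 y = (a j + 1) * lform j y - coord y j.
Proof.
rewrite /lform /= mulrDr -addrA; congr (_ + _).
by rewrite mulr_sumr /coord -sumrB; apply: eq_bigr => i _; rewrite mulrBl mulrA.
Qed.

Lemma lformD j y z :
  lform j (y + z) = lform j y + \sum_(i < n) lform_coef j i * z i 0.
Proof.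
rewrite /lform -addrA -big_split; congr (_ + _).
by apply: eq_bigr => i _; rewrite mxE mulrDr.
Qed.

Lemma lform_comb j y z t :
  lform j (t *: y + (1 - t) *: z) = t * lform j y + (1 - t) * lform j z.
Proof.
rewrite /lform !mulrDr !mulr_sumr.
have -> : \sum_(i < n) lform_coef j i * (t *: y + (1 - t) *: z) i 0 =
    \sum_(i < n) t * (lform_coef j i * y i 0) +
    \sum_(i < n) (1 - t) * (lform_coef j i * z i 0).
  by rewrite -big_split; apply: eq_bigr => i _; rewrite !mxE /=; ring.
ring.
Qed.

Lemma lexineq_mxE y r : (lexineq_mx *m y) r 0 =
  match split r with
  | inl j => a j * (lform j y - lform_cst j) - coord y j
  | inr j => - coord y j end.
Proof.
rewrite mxE /lform; under eq_bigr => i _ do rewrite mxE.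
case: split => j.
  rewrite addrAC subrr add0r mulr_sumr /coord -sumrB.
  by apply: eq_bigr => i _ /=; rewrite mulrBl mulrA.
by rewrite /coord -sumrN; apply: eq_bigr => i _; rewrite mulNr.
Qed.

Lemma lexineq_mxP y :
  (forall r, (lexineq_mx *m y) r 0 <= lexineq_rhs r 0) <-> lexineq y.
Proof.
split => [le_y j | ley r].
  case: (ltnP j n) => [jn|nj]; last by rewrite !coord_out // mul0r.
  have := le_y (unsplit (inl (Ordinal jn))).
  have := le_y (unsplit (inr (Ordinal jn))).
  rewrite !lexineq_mxE !mxE !unsplitK /= mulrBr; lra.
rewrite lexineq_mxE mxE; case: split => j /=; have [] := ley j.
  rewrite mulrBr; lra.
by rewrite oppr_le0.
Qed.

Lemma lexineq_comb m (w : 'I_m -> R) (p : 'I_m -> 'cV[R]_n) :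
  (forall k, lexineq (p k)) -> (forall k, 0 <= w k) -> \sum_k w k = 1 ->
  lexineq (\sum_k w k *: p k).
Proof.
move=> lep w_ge0 w_sum1; apply/lexineq_mxP => r.
rewrite mulmx_sumr summxE -[lexineq_rhs r 0]mul1r -w_sum1 mulr_suml.
apply: ler_sum => k _; rewrite -scalemxAr mxE ler_wpM2l ?w_ge0 //.
exact: (lexineq_mxP (p k)).2 (lep k) r.
Qed.

Hypothesis A_ge0 : forall i, 0 <= A i 0.

Let a_ge0 j : 0 <= a j. Proof. exact: coord_ge0. Qed.

Lemma lform_coef_le0 j i : lform_coef j i <= 0.
Proof.
elim: j => //= j IHj.
have : (a j + 1) * lform_coef j i <= 0 by rewrite mulr_ge0_le0 ?addr_ge0.
have := ler0n R (i == j); lra.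
Qed.

Lemma lexineq_addr y (d : 'cV[R]_n) :
  lexineq y -> (forall i, 0 <= d i 0) -> lexineq (y + d).
Proof.
move=> ley d_ge0 j; have [y_ge0 y_ineq] := ley j.
have d_j := coord_ge0 d_ge0 j.
rewrite coordD lformD; split; first exact: addr_ge0.
have : \sum_(i < n) lform_coef j i * d i 0 <= 0.
  rewrite -oppr_ge0 -sumrN; apply: sumr_ge0 => i _.
  by rewrite -mulNr mulr_ge0 ?d_ge0 // oppr_ge0 lform_coef_le0.
move=> /(ler_wpM2l (a_ge0 j)); rewrite mulr0; lra.
Qed.

Lemma lform_prefix y k : (forall j, (j < k)%N -> coord y j = a j) ->
  forall j, (j <= k)%N -> lform j y = 1.
Proof.
move=> eq_ya; elim=> [|j IHj] jk; first exact: lform0.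
by rewrite lformS IHj ?(ltnW jk) // eq_ya //; ring.
Qed.

Lemma lform_tail_le0 y i : (forall j, 0 <= coord y j) ->
  lform i y <= 0 -> forall j, (i <= j)%N -> lform j y <= 0.
Proof.
move=> y_ge0 Li_le0; elim=> [|j IHj]; first by rewrite leqn0 => /eqP <-.
rewrite leq_eqVlt => /orP[/eqP <- // | ij]; rewrite lformS.
have : (a j + 1) * lform j y <= 0 by rewrite mulr_ge0_le0 ?addr_ge0 ?IHj.
have := y_ge0 j; lra.
Qed.

Hypothesis A_int : forall i, A i 0 \is a Num.int.

Definition lex_point q : Prop :=
  (forall i, 0 <= q i 0) /\ (forall i, q i 0 \is a Num.int) /\
  (q = A \/ exists i : 'I_n,
     (forall j : 'I_n, (j < i)%N -> A j 0 = q j 0) /\ A i 0 < q i 0).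

Lemma lex_point_lexineq q : lex_point q -> lexineq q.
Proof.
move=> [q_ge0 [q_int q_lex]] j.
have qj_ge0 := coord_ge0 q_ge0 j; split => //.
case: (ltnP j n) => [jn|nj]; last by rewrite !coord_out // mul0r.
case: q_lex => [-> | [i [eq_qA lt_Aq]]].
  by rewrite (lform_prefix (k := j)) ?mulr1.
have eq_qa k : (k < i)%N -> coord q k = a k.
  move=> ki; have kn := ltn_trans ki (ltn_ord i).
  by rewrite -[k]/(nat_of_ord (Ordinal kn)) !coord_ord eq_qA.
have Li1_le0 : lform i.+1 q <= 0.
  rewrite lformS (lform_prefix eq_qa) // mulr1 !coord_ord.
  have := int_num_ltD1 (A_int i) (q_int i) lt_Aq; lra.
case: (ltngtP j i) => [ji|ij|->].
- by rewrite (lform_prefix eq_qa (ltnW ji)) mulr1 eq_qa.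
- apply: le_trans qj_ge0.
  by rewrite mulr_ge0_le0 // (lform_tail_le0 (coord_ge0 q_ge0) Li1_le0 ij).
- by rewrite (lform_prefix eq_qa) // mulr1 !coord_ord ltW.
Qed.

Definition lexvertex k : 'cV[R]_n :=
  \col_(i < n) (a i * (i <= k)%N%:R + (i == k :> nat)%:R).

Lemma lexvertexE k (i : 'I_n) :
  lexvertex k i 0 = A i 0 * (i <= k)%N%:R + (i == k :> nat)%:R.
Proof. by rewrite mxE coord_ord. Qed.

Lemma coord_lexvertex k j : coord (lexvertex k) j =
  if (j < n)%N then a j * (j <= k)%N%:R + (j == k)%:R else 0.
Proof.
case: ltnP => [jn|/coord_out//].
by rewrite -[j]/(nat_of_ord (Ordinal jn)) coord_ord mxE.
Qed.

Lemma coord_lexvertex_lt k j : (j < k)%N -> coord (lexvertex k) j = a j.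
Proof.
move=> jk; rewrite coord_lexvertex (ltnW jk) ltn_eqF // mulr1 addr0.
by case: ltnP => // /coord_out->.
Qed.

Lemma coord_lexvertex_gt k j : (k < j)%N -> coord (lexvertex k) j = 0.
Proof.
move=> kj; rewrite coord_lexvertex (leqNgt j k) kj gtn_eqF //.
by rewrite mulr0 addr0 if_same.
Qed.

Lemma coord_lexvertex_eq k : (k < n)%N -> coord (lexvertex k) k = a k + 1.
Proof. by move=> kn; rewrite coord_lexvertex kn leqnn eqxx mulr1. Qed.

Lemma lexvertex_out k : (n <= k)%N -> lexvertex k = A.
Proof.
move=> nk; apply: coord_inj => j; case: (ltnP j n) => [jn|nj].
  by rewrite coord_lexvertex_lt // (leq_trans jn nk).
by rewrite !coord_out.
Qed.

Lemma lex_point_lexvertex k : lex_point (lexvertex k).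
Proof.
split; [|split].
- by move=> i; rewrite lexvertexE addr_ge0 ?mulr_ge0.
- by move=> i; rewrite lexvertexE rpredD ?rpredM ?natr_int.
case: (ltnP k n) => [kn|/lexvertex_out->]; last by left.
right; exists (Ordinal kn); split => [j /= jk|].
  by rewrite -!coord_ord coord_lexvertex_lt.
by rewrite -!coord_ord coord_lexvertex_eq // ltrDl.
Qed.

Lemma lex_point_add_unitv q i (m : R) : lex_point q ->
  m \is a Num.int -> 0 <= m -> lex_point (q + m *: unitv i).
Proof.
move=> [q_ge0 [q_int q_lex]] m_int m_ge0; split; [|split].
- by move=> j; rewrite !mxE addr_ge0 ?mulr_ge0.
- by move=> j; rewrite !mxE rpredD ?rpredM ?natr_int.
have [->|m_neq0] := eqVneq m 0; first by rewrite scale0r addr0.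
have m_gt0 : 0 < m by rewrite lt_def m_neq0.
have addE (p : 'cV[R]_n) (j : 'I_n) :
    (p + m *: unitv i) j 0 = p j 0 + m * (j == i :> nat)%:R.
  by rewrite !mxE.
case: (ltnP i n) => [i_n|n_i]; last first.
  by move: q_lex; rewrite (_ : unitv i = 0) ?scaler0 ?addr0 //;
    apply/matrixP => j k; rewrite !mxE ltn_eqF // (leq_trans (ltn_ord j) n_i).
right; case: q_lex => [->|[k [eq_Aq lt_Aq]]].
  exists (Ordinal i_n); split => [j /= ji|]; rewrite addE /=.
    by rewrite ltn_eqF // mulr0 addr0.
  by rewrite eqxx mulr1 ltrDl.
case: (leqP k i) => [ki|ik].
  exists k; split => [j jk|]; rewrite addE.
    by rewrite ltn_eqF ?mulr0 ?addr0 ?eq_Aq // (leq_trans jk ki).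
  by rewrite ltr_wpDr ?mulr_ge0.
exists (Ordinal i_n); split => [j /= ji|]; rewrite addE /=.
  by rewrite ltn_eqF ?mulr0 ?addr0 ?eq_Aq // (ltn_trans ji ik).
by rewrite eqxx mulr1 -(eq_Aq (Ordinal i_n)) // ltrDl.
Qed.

Lemma lexvertex_tail k :
  (forall i, (k < i)%N -> a i = 0) -> lexvertex k = A + unitv k.
Proof.
move=> a_tail; apply/matrixP => i j; rewrite ord1 lexvertexE !mxE.
case: (leqP i k) => [_ | ki]; first by rewrite mulr1.
by rewrite -coord_ord a_tail // mul0r add0r.
Qed.

(* The nonincreasing weights max(0, L_j(y)); their successive differences are
   the convex weights of the v^k in lexineq_decomp. *)
Definition lexweight y j : R := if (j <= n)%N then Num.max 0 (lform j y) else 0.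

Lemma lexweight_step y j : lexineq y -> (j < n)%N ->
  (a j + 1) * lexweight y j - coord y j <= lexweight y j.+1 <= lexweight y j.
Proof.
move=> ley jn; rewrite /lexweight jn ltnW // lformS.
have maxE (x : R) : (0 <= x /\ Num.max 0 x = x) \/ (x < 0 /\ Num.max 0 x = 0).
  by case: leP; [left | right].
have [y_ge0 y_ineq] := ley j.
case: (maxE (lform j y)) => [[L_ge0 ->]|[L_lt0 ->]];
  case: (maxE ((a j + 1) * lform j y - coord y j)) => [[L'_ge0 ->]|[L'_lt0 ->]];
  apply/andP; split; rewrite ?mulrDl ?mul1r ?mulr0; try lra.
Qed.

Lemma lexineq_decomp y : lexineq y ->
  exists (lam : 'I_n.+1 -> R) (r : 'cV[R]_n),
  [/\ forall k, 0 <= lam k, \sum_k lam k = 1, forall i, 0 <= r i 0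
    & y = \sum_k lam k *: (lexvertex k + r)].
Proof.
move=> ley; pose rho := lexweight y; pose lam (k : 'I_n.+1) := rho k - rho k.+1.
have rho_out : rho n.+1 = 0 by rewrite /rho /lexweight ltnn.
have rho_ge0 j : 0 <= rho j.
  by rewrite /rho /lexweight; case: ifP; rewrite ?le_max ?lexx.
have sum_lam i : (i <= n.+1)%N -> \sum_(k < n.+1) (i <= k)%N%:R * lam k = rho i.
  move=> iSn; transitivity (\sum_(i <= k < n.+1) (rho k - rho k.+1)).
    rewrite big_geq_mkord [RHS]big_mkcond; apply: eq_bigr => k _.
    by rewrite mulr_natl mulrb.
  rewrite (@telescope_sumr_eq _ _ _ (fun k => - rho k)) // => [|k _]; last by ring.
  by rewrite rho_out; ring.
have lam_sum1 : \sum_k lam k = 1.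
  transitivity (rho 0%N); last first.
    by rewrite /rho /lexweight /= lform0; case: leP => //; rewrite ltr10.
  by rewrite -sum_lam //; apply: eq_bigr => k _; rewrite leq0n mulr_natl mulr1n.
pose r := y - \sum_k lam k *: lexvertex k.
exists lam, r; split => //.
- move=> k; rewrite subr_ge0; case: (ltnP k n) => [kn|nk].
    by have /andP[] := lexweight_step ley kn.
  have -> : (k : nat) = n by apply/anti_leq; rewrite -ltnS ltn_ord nk.
  by rewrite rho_out; apply: rho_ge0.
- move=> i; rewrite !mxE subr_ge0 summxE.
  rewrite (eq_bigr (fun k : 'I_n.+1 => a i * ((i <= k)%N%:R * lam k) +
      (i == k :> nat)%:R * lam k)); last by move=> k _; rewrite !mxE; ring.
  rewrite big_split /= -mulr_sumr (sum_lam i); last exact: leqW (ltnW (ltn_ord i)).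
  rewrite (@sum_ord_delta _ n.+1 (fun k => rho k - rho k.+1) i); last first.
    exact: leqW (ltn_ord i).
  have /andP[+ _] := lexweight_step ley (ltn_ord i).
  rewrite !coord_ord -/rho mulrDl mul1r; lra.
rewrite (eq_bigr (fun k => lam k *: lexvertex k + lam k *: r)) => [|k _]; last first.
  by rewrite scalerDr.
by rewrite big_split /= -scaler_suml lam_sum1 scale1r addrC subrK.
Qed.

Lemma lform_tail_eq0 y k j : (forall i, (k <= i)%N -> coord y i = 0) ->
  (k <= j)%N -> (lform j y == 0) = (lform k y == 0).
Proof.
move=> y_tail0; elim: j => [|j IHj]; first by rewrite leqn0 => /eqP ->.
rewrite leq_eqVlt => /orP[/eqP <- // | kj].
rewrite lformS y_tail0 // subr0 mulf_eq0 IHj //.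
by rewrite gt_eqF // ltr_wpDl.
Qed.

Section ConvexSplit.
Variables (Y Z : 'cV[R]_n) (t : R).
Hypotheses (t01 : 0 < t < 1) (leY : lexineq Y) (leZ : lexineq Z).
Local Notation X := (t *: Y + (1 - t) *: Z).

Let coordX j : coord X j = t * coord Y j + (1 - t) * coord Z j.
Proof. by rewrite coordD !coordZ. Qed.

Lemma split_coord_eq0 j : coord X j = 0 -> coord Y j = 0.
Proof.
rewrite coordX; apply: convex_comb_eq0l => //; [exact: (leY j).1 | exact: (leZ j).1].
Qed.

Lemma split_tight j :
  coord X j = a j * lform j X -> coord Y j = a j * lform j Y.
Proof.
move=> tightX; apply/eqP; rewrite -subr_eq0; apply/eqP.
apply: (@convex_comb_eq0l _ t _ (coord Z j - a j * lform j Z)) => //.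
- by rewrite subr_ge0; exact: (leY j).2.
- by rewrite subr_ge0; exact: (leZ j).2.
move: tightX; rewrite coordX lform_comb => /eqP; rewrite -subr_eq0 => /eqP <-.
ring.
Qed.

Lemma split_prefix k : X = lexvertex k ->
  forall j, (j <= k)%N -> lform j Y = 1 /\ forall i, (i < j)%N -> coord Y i = a i.
Proof.
move=> eqX; have LX := lform_prefix (fun i => @coord_lexvertex_lt k i).
elim=> [|j IHj] jk; first by rewrite lform0.
have [LY_j eq_Ya] := IHj (ltnW jk).
have /split_tight : coord X j = a j * lform j X.
  by rewrite eqX LX ?(ltnW jk) // mulr1 coord_lexvertex_lt.
rewrite LY_j mulr1 => eq_Yj; split; first by rewrite lformS LY_j eq_Yj; ring.
by move=> i; rewrite ltnS leq_eqVlt => /orP[/eqP -> | /eq_Ya].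
Qed.

Lemma split_lexvertex_gt k :
  X = lexvertex k -> forall i, (k < i)%N -> coord Y i = 0.
Proof. by move=> eqX i ki; apply: split_coord_eq0; rewrite eqX coord_lexvertex_gt. Qed.

Lemma split_eqA : X = A -> Y = A.
Proof.
rewrite -{1}(lexvertex_out (leqnn n)) => eqX.
have [_ eq_Ya] := split_prefix eqX (leqnn n).
apply: coord_inj => j; case: (ltnP j n) => [/eq_Ya // | nj].
by rewrite !coord_out.
Qed.

Lemma split_lexvertex k l : (k < l)%N -> 0 < a l ->
  X = lexvertex k -> Y = lexvertex k.
Proof.
move=> kl al_gt0 eqX.
have ln : (l < n)%N.
  by rewrite ltnNge; apply: contraTN al_gt0 => /coord_out->; rewrite ltxx.
have kn := ltn_trans kl ln.
have [LY_k eq_Ya] := split_prefix eqX (leqnn k).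
have Y_gt := split_lexvertex_gt eqX.
have LX_l : lform l X = 0.
  have v_tail0 i : (k.+1 <= i)%N -> coord (lexvertex k) i = 0.
    exact: coord_lexvertex_gt.
  apply/eqP; rewrite eqX (lform_tail_eq0 v_tail0 kl).
  rewrite lformS coord_lexvertex_eq //.
  by rewrite (lform_prefix (fun i => @coord_lexvertex_lt k i)) // mulr1 subrr.
have /split_tight : coord X l = a l * lform l X.
  by rewrite LX_l mulr0 eqX coord_lexvertex_gt.
rewrite Y_gt // => /esym/eqP; rewrite mulf_eq0 gt_eqF //=.
rewrite (lform_tail_eq0 Y_gt kl) lformS LY_k mulr1 subr_eq0 => /eqP eq_Yk.
apply: coord_inj => j; case: (ltngtP j k) => [jk | kj | ->].
- by rewrite eq_Ya // coord_lexvertex_lt.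
- by rewrite Y_gt // coord_lexvertex_gt.
- by rewrite coord_lexvertex_eq.
Qed.

End ConvexSplit.

End LexHull.

(* [Defs.realmx] is qualified because MathComp's [realmx] (matrices with real
   entries) shadows it. *)
Lemma lattice_basis_inverse (R : realType) n (C : 'M[int]_n) :
  lattice_basis R C ->
  exists N : 'M[R]_n, [/\ N *m Defs.realmx C = 1%:M, Defs.realmx C *m N = 1%:M
                        & forall i j, N i j \is a Num.int].
Proof.
move=> [_ spanC].
have [f Hf] := fin_all_exists (fun i : 'I_n => spanC (delta_mx 0 i)).
pose L : 'M[int]_n := \matrix_(i, j) f i 0 j.
have LC : L *m C = 1%:M.
  apply/matrixP => i j; rewrite !mxE.
  have /matrixP/(_ 0 j) := Hf i; rewrite !mxE eq_sym => ->.
  by apply: eq_bigr => k _; rewrite mxE.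
have NM : Defs.realmx L *m Defs.realmx C = 1%:M :> 'M[R]_n.
  by rewrite /Defs.realmx -map_mxM LC map_scalar_mx /= rmorph1.
exists (Defs.realmx L); split => //; first exact: mulmx1C.
by move=> i j; rewrite mxE intr_int.
Qed.

Section Qset.
Variables (R : realType) (n : nat) (C : 'M[int]_n) (xbar : 'cV[R]_n).
Variable N : 'M[R]_n.
Hypotheses (NM : N *m Defs.realmx C = 1%:M) (MN : Defs.realmx C *m N = 1%:M).
Hypothesis N_int : forall i j, N i j \is a Num.int.
Hypotheses (K_xbar : Kcone C xbar) (int_xbar : is_int_vec xbar).
Implicit Types (x v r : 'cV[R]_n).
Local Notation M := (Defs.realmx C).
Local Notation A := (M *m xbar).
Local Notation Q := (Qset C xbar).

Lemma mulNMx x : N *m (M *m x) = x. Proof. by rewrite mulmxA NM mul1mx. Qed.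
Lemma mulMNx x : M *m (N *m x) = x. Proof. by rewrite mulmxA MN mul1mx. Qed.

Lemma realmx_inj x y : M *m x = M *m y -> x = y.
Proof. by move=> eq_Mxy; rewrite -(mulNMx x) eq_Mxy mulNMx. Qed.

Lemma int_vec_realmx x : is_int_vec x -> forall i, (M *m x) i 0 \is a Num.int.
Proof.
move=> int_x i; rewrite mxE; apply: rpred_sum => j _.
by rewrite rpredM ?int_x // mxE intr_int.
Qed.

Lemma int_vec_inv x : (forall i, x i 0 \is a Num.int) -> is_int_vec (N *m x).
Proof. by move=> int_x i; rewrite mxE rpred_sum // => j _; rewrite rpredM. Qed.

Let A_ge0 : forall i, 0 <= A i 0. Proof. exact: K_xbar. Qed.
Let A_int : forall i, A i 0 \is a Num.int. Proof. exact: int_vec_realmx. Qed.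

Lemma lex_pointE x :
  (Kcone C x /\ is_int_vec x /\ lex_ge C x xbar) <-> lex_point A (M *m x).
Proof.
split=> [[K_x [int_x [->|[_ [i lex_i]]]]] | [x_ge0 [int_Mx lex_x]]].
- by split=> //; split; [exact: int_vec_realmx | left].
- by split=> //; split; [exact: int_vec_realmx | right; exists i].
split=> //; split; first by rewrite -[x]mulNMx; apply: int_vec_inv.
case: lex_x => [/realmx_inj-> | [i [eqA ltA]]]; first by left.
by right; split; [move=> eq_x; rewrite eq_x ltxx in ltA | exists i].
Qed.

Lemma Qset_lex_point q : lex_point A q -> Q (N *m q).
Proof. by move=> lex_q; apply: mem_conv; apply/lex_pointE; rewrite mulMNx. Qed.

Lemma Qset_lexvertex_addr k r : (forall i, 0 <= r i 0) ->
  Q (N *m (lexvertex A k + r)).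
Proof.
move=> r_ge0.
have [w [m [w_ge0 w_sum1 m_int ->]]] := nonneg_split_unitv r_ge0.
rewrite mulmx_sumr.
under eq_bigr => p _ do rewrite -scalemxAr.
apply: conv_fin => // p; apply/lex_pointE; rewrite mulMNx.
by apply: lex_point_add_unitv; [apply: lex_point_lexvertex | case: (m_int p)..].
Qed.

Lemma QsetE x : Q x <-> lexineq A (M *m x).
Proof.
split=> [[m [p [w [Qp [w_ge0 [w_sum1 ->]]]]]] | le_x].
  rewrite mulmx_sumr (eq_bigr (fun j => w j *: (M *m p j))) => [|j _]; last first.
    by rewrite scalemxAr.
  by apply: lexineq_comb => // j; apply/lex_point_lexineq/lex_pointE.
have [lam [r [lam_ge0 lam_sum1 r_ge0 eq_Mx]]] := lexineq_decomp le_x.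
rewrite -[x]mulNMx eq_Mx mulmx_sumr.
under eq_bigr => k _ do rewrite -scalemxAr.
by apply: conv_convex => // k; apply: Qset_lexvertex_addr.
Qed.

Lemma Qset_xbar : Q xbar.
Proof. by apply: mem_conv; split=> //; split=> //; left. Qed.

Lemma Qset_rec_cone d : rec_cone Q d <-> Kcone C d.
Proof.
split=> [rec_d i | K_d x Qx t t_ge0]; last first.
  apply/QsetE; rewrite mulmxDr -scalemxAr.
  apply: lexineq_addr => //; first exact/QsetE.
  by move=> i; rewrite mxE mulr_ge0 //; apply: K_d.
rewrite /cdot; case: (leP 0 ((M *m d) i 0)) => // Md_lt0.
pose t := (A i 0 + 1) / - (M *m d) i 0.
have t_ge0 : 0 <= t by rewrite divr_ge0 ?oppr_ge0 ?ltW // ltr_wpDl ?A_ge0.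
have /QsetE/(_ i) [+ _] := rec_d _ Qset_xbar t t_ge0.
rewrite coord_ord mulmxDr -scalemxAr [X in 0 <= X]mxE [X in _ + X]mxE.
have -> : t * (M *m d) i 0 = - (A i 0 + 1) by rewrite /t; field; rewrite lt_eqF.
lra.
Qed.

Lemma Qset_polyhedron : polyhedron Q.
Proof.
exists (n + n)%N, (lexineq_mx A *m M), (lexineq_rhs A) => x.
rewrite QsetE -lexineq_mxP.
by split=> le_x r; [rewrite -mulmxA | rewrite mulmxA]; apply: le_x.
Qed.

Lemma lex_point_xbar : lex_point A A.
Proof. by split=> //; split=> //; left. Qed.

Lemma Qset_full_dim : full_dim Q.
Proof.
exists xbar, N; split; first exact: Qset_xbar.
split; first exact: (mulmx1_unit NM).1.
move=> j; have -> : xbar + col j N = N *m (A + delta_mx j 0).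
  by rewrite mulmxDr mulNMx colE.
have -> : delta_mx j 0 = 1 *: unitv j :> 'cV[R]_n.
  by apply/matrixP => i k; rewrite ord1 !mxE mul1r andbT.
apply: Qset_lex_point; apply: lex_point_add_unitv.
- exact: lex_point_xbar.
- exact: rpred1.
- exact: ler01.
Qed.

Lemma extreme_Qset_lexineq v : Q v ->
  (forall Y Z t, 0 < t < 1 -> lexineq A Y -> lexineq A Z ->
     t *: Y + (1 - t) *: Z = M *m v -> Y = M *m v) ->
  extreme_point Q v.
Proof.
move=> Qv split_v; split=> // y z t /QsetE le_y /QsetE le_z t01 eq_v.
have t01' : 0 < 1 - t < 1 by move: t01 => /andP[? ?]; apply/andP; split; lra.
have eq_Mv : M *m v = t *: (M *m y) + (1 - t) *: (M *m z).
  by rewrite eq_v mulmxDr -!scalemxAr.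
split; apply: realmx_inj.
  exact: (split_v _ (M *m z) t).
apply: (split_v _ (M *m y) (1 - t)) => //.
by rewrite eq_Mv opprB addrCA subrr addr0 addrC.
Qed.

Lemma extreme_Qset_xbar : extreme_point Q xbar.
Proof.
apply: extreme_Qset_lexineq Qset_xbar _ => Y Z t t01 le_Y le_Z.
exact: split_eqA.
Qed.

Lemma extreme_Qset_lexvertex k l : (k < l)%N -> 0 < coord A l ->
  extreme_point Q (N *m lexvertex A k).
Proof.
move=> kl al_gt0; apply: extreme_Qset_lexineq => [|Y Z t t01 le_Y le_Z].
  by apply: Qset_lex_point; apply: lex_point_lexvertex.
by rewrite mulMNx; apply: (split_lexvertex A_ge0 t01 le_Y le_Z kl al_gt0).
Qed.

Lemma extreme_QsetP v :
  extreme_point Q v -> exists k : 'I_n.+1, M *m v = lexvertex A k.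
Proof.
move=> ext_v; have [/QsetE le_v _] := ext_v.
have [lam [r [lam_ge0 lam_sum1 r_ge0 eq_Mv]]] := lexineq_decomp le_v.
have v_comb : v = \sum_k lam k *: (N *m (lexvertex A k + r)).
  by rewrite -[v]mulNMx eq_Mv mulmx_sumr; apply: eq_bigr => k _; rewrite scalemxAr.
have [k eq_v] := extreme_point_comb (@conv_convex _ _ _) ext_v
  (fun k => Qset_lexvertex_addr k r_ge0) lam_ge0 lam_sum1 v_comb.
(* v = N (v^k + r) is the midpoint of N v^k and N (v^k + 2 r), so r = 0. *)
exists k; rewrite -[lexvertex A k]mulMNx; congr (_ *m _); symmetry.
apply: (extreme_point_midpoint ext_v (z := N *m (lexvertex A k + 2%:R *: r))).
- by apply: Qset_lex_point; apply: lex_point_lexvertex.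
- by apply: Qset_lexvertex_addr => i; rewrite mxE mulr_ge0 ?ler0n.
apply: realmx_inj; rewrite eq_v mulMNx [RHS]mulmxDr -!scalemxAr !mulMNx.
by apply/matrixP => i j; rewrite !mxE; field.
Qed.

Lemma not_extreme_Qset_lexvertex k : (k < n)%N ->
  (forall i, (k < i)%N -> coord A i = 0) ->
  ~ extreme_point Q (N *m lexvertex A k).
Proof.
move=> kn A_tail ext_v.
have eq_vk := lexvertex_tail A_tail.
have : xbar = N *m lexvertex A k.
  apply: (extreme_point_midpoint ext_v (z := N *m (A + 2%:R *: unitv k))).
  - exact: Qset_xbar.
  - apply: Qset_lex_point; apply: lex_point_add_unitv => //.
    exact: lex_point_xbar.
  apply: realmx_inj; rewrite mulMNx [RHS]mulmxDr -!scalemxAr !mulMNx eq_vk.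
  by apply/matrixP => i j; rewrite !mxE; field.
move=> /(congr1 (mulmx M)); rewrite mulMNx => /(congr1 (fun y => coord y k)).
rewrite coord_lexvertex_eq // => /eqP; rewrite -subr_eq0 opprD addrA subrr.
by rewrite add0r oppr_eq0 oner_eq0.
Qed.

Lemma vpointE (k : 'I_n) v : vpoint C xbar k v <-> M *m v = lexvertex A k.
Proof.
rewrite /vpoint /cdot; split=> [[lt_k [eq_k gt_k]] | eq_v].
  apply/matrixP => i j; rewrite ord1 lexvertexE.
  case: (ltngtP i k) => [ik | ki | /val_inj ->]; rewrite /= ?mulr1 ?mulr0 ?addr0.
  - exact: lt_k.
  - exact: gt_k.
  - exact: eq_k.
rewrite eq_v; split=> [i ik|]; last split=> [|i ki].
- by rewrite lexvertexE ltnW // ltn_eqF ?mulr1 ?addr0.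
- by rewrite lexvertexE leqnn eqxx mulr1.
- by rewrite lexvertexE (leqNgt i k) ki gtn_eqF // mulr0 addr0.
Qed.

Lemma extreme_QsetE l : leading_index C xbar l -> forall v,
  extreme_point Q v <-> v = xbar \/ exists k : 'I_n, (k < l)%N /\ vpoint C xbar k v.
Proof.
move=> [Al_gt0 A_tail] v.
have al_gt0 : 0 < coord A l by rewrite coord_ord.
have a_tail i : (l < i)%N -> coord A i = 0.
  case: (ltnP i n) => [i_n li | /coord_out-> //].
  rewrite -[i]/(nat_of_ord (Ordinal i_n)) coord_ord; apply/eqP.
  by rewrite eq_le A_ge0 andbT leNgt; apply/negP/(A_tail (Ordinal i_n)).
split=> [ext_v | [-> | [k [kl /vpointE eq_v]]]].
- have [k eq_v] := extreme_QsetP ext_v.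
  case: (ltnP k n) => [kn | nk]; last first.
    by left; apply: realmx_inj; rewrite eq_v lexvertex_out.
  case: (ltnP k l) => [kl | lk].
    by right; exists (Ordinal kn); split=> //; apply/vpointE.
  have := not_extreme_Qset_lexvertex kn (fun i => a_tail i \o leq_ltn_trans lk).
  by rewrite -eq_v mulNMx.
- exact: extreme_Qset_xbar.
- by rewrite -[v]mulNMx eq_v; apply: extreme_Qset_lexvertex kl al_gt0.
Qed.

End Qset.

Theorem lemma3 (R : realType) (n : nat) (C : 'M[int]_n) (xbar : 'cV[R]_n) :
  lattice_basis R C ->
  Kcone C xbar -> is_int_vec xbar ->
  (forall d, rec_cone (Qset C xbar) d <-> Kcone C d) /\
  polyhedron (Qset C xbar) /\
  full_dim (Qset C xbar) /\
  (xbar <> 0 -> forall l : 'I_n, leading_index C xbar l ->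
     forall v, extreme_point (Qset C xbar) v <->
       (v = xbar \/ exists k : 'I_n, (k < l)%N /\ vpoint C xbar k v)).
Proof.
move=> basis_C K_xbar int_xbar.
have [N [NM MN N_int]] := lattice_basis_inverse basis_C.
split; first exact: Qset_rec_cone NM MN N_int K_xbar int_xbar.
split; first exact: Qset_polyhedron NM MN N_int K_xbar int_xbar.
split; first exact: Qset_full_dim NM MN N_int K_xbar int_xbar.
(* [xbar <> 0] is implied by the existence of a leading index. *)
by move=> _; apply: extreme_QsetE NM MN N_int K_xbar int_xbar.
Qed.
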